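(* For $k,\ell\in\mathbb Z_{\ge0}$, $$p_c^{(k-2\ell;k)}(t)=\sum_{m=0}^k\frac1{2^m}k^{\underline m}K_m(\ell;k)t^m,\qquad p_c^{(2k-\ell;\ell)}(t)=\sum_{m=0}^{\ell}\frac{(-1)^m}{2^m}\ell^{\underline m}K_m(k;\ell)t^m.$$
   Context: $r^{\underline m}=r(r-1)\cdots(r-m+1)$, $r^{\overline m}=r(r+1)\cdots(r+m-1)$. Binomial coefficients: $\binom am=a(a-1)\cdots(a-m+1)/m!$ for $m\in\mathbb Z_{\ge1}$, $\binom a0=1$, and $\binom am=0$ for negative integers $m$. Binary Krawtchouk polynomials: $K_m(x;y)=\sum_{j=0}^m(-1)^j\binom xj\binom{y-x}{m-j}$. Cayley continuants $\mathrm{Cay}_m(x;y)=\sum_{j=0}^m\binom mj(\frac{x+y}2)^{\underline j}(\frac{x-y}2)^{\overline{m-j}}$. $p_c^{(s;k)}(t)=\sum_{m=0}^k\frac1{2^m}\binom km\mathrm{Cay}_m(s;k)t^m$ for $s\in\mathbb C$, $k\in\mathbb Z_{\ge0}$. *)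

(* Polynomials in t are elements of {poly R}, R any
   numFieldType (characteristic 0 field containing Q; C is an instance). *)
From HB Require Import structures.
From mathcomp Require Import all_boot all_order all_algebra.
Set Implicit Arguments. Unset Strict Implicit. Unset Printing Implicit Defensive.
Import Order.TTheory GRing.Theory Num.Theory.
Local Open Scope ring_scope.

Definition falling {R : numFieldType} (r : R) (m : nat) : R :=
  \prod_(i < m) (r - i%:R).

Definition rising {R : numFieldType} (r : R) (m : nat) : R :=
  \prod_(i < m) (r + i%:R).

Definition gbinom {R : numFieldType} (a : R) (m : nat) : R :=
  falling a m / (m`!)%:R.

Definition kraw {R : numFieldType} (m : nat) (x y : R) : R :=
  \sum_(j < m.+1) (-1) ^+ j * gbinom x j * gbinom (y - x) (m - j).

Definition cay {R : numFieldType} (m : nat) (x y : R) : R :=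
  \sum_(j < m.+1) ('C(m, j))%:R * falling ((x + y) / 2) j
                    * rising ((x - y) / 2) (m - j).

Definition pc {R : numFieldType} (s : R) (k : nat) : {poly R} :=
  \poly_(m < k.+1) ((2 ^+ m)^-1 * ('C(k, m))%:R * cay m s k%:R).

From HB Require Import structures.
From mathcomp Require Import all_boot all_order all_algebra.
From mathcomp Require Import ring.
Import Order.TTheory GRing.Theory Num.Theory.
Local Open Scope ring_scope.

(** Expanding the rising factorials of the Cayley continuant as signed falling
   factorials turns [Cay_m(x;y)] into [m!] times a Krawtchouk value
   [K_m((y-x)/2; y)].  For [s = k - 2l] this is [K_m(l;k)]; for [s = 2k - l]
   it is [K_m(l-k;l)], which the reflection [K_m(y-x;y) = (-1)^m K_m(x;y)]
   brings to [(-1)^m K_m(k;l)].  Finally [binom k m * m! = k^{\underline m}]. *)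

Section FactorialsKrawtchouk.
Variable R : numFieldType.
Implicit Types (a b x y : R) (k m n : nat).

Lemma fallingS a n : falling a n.+1 = falling a n * (a - n%:R).
Proof. by rewrite /falling big_ord_recr. Qed.

Lemma rising_opp b n : rising (- b) n = (-1) ^+ n * falling b n.
Proof.
rewrite /rising /falling; elim: n => [|n IH]; first by rewrite !big_ord0 expr0 mul1r.
by rewrite !big_ord_recr /= IH exprS; ring.
Qed.

Lemma falling_gbinom a n : falling a n = n`!%:R * gbinom a n.
Proof. by rewrite /gbinom mulrC mulfVK // pnatr_eq0 -lt0n fact_gt0. Qed.

Lemma falling_natr k m : falling (k%:R : R) m = (k ^_ m)%:R.
Proof.
elim: m => [|m IH]; first by rewrite /falling big_ord0.
rewrite fallingS ffactnSr natrM IH.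
have [le_mk | lt_km] := leqP m k; first by rewrite natrB.
by rewrite ffact_small // !mul0r.
Qed.

Lemma natr_bin_fact k m : 'C(k, m)%:R * m`!%:R = falling (k%:R : R) m.
Proof. by rewrite -natrM bin_ffact falling_natr. Qed.

Lemma kraw_rev m x y :
  kraw m x y = \sum_(j < m.+1) (-1) ^+ (m - j) * gbinom (y - x) j * gbinom x (m - j).
Proof.
rewrite /kraw (reindex_inj rev_ord_inj); apply: eq_bigr => -[j /= lt_jm] _.
by rewrite subSS subKn; [ring | rewrite -ltnS].
Qed.

Lemma kraw_reflect m x y : kraw m (y - x) y = (-1) ^+ m * kraw m x y.
Proof.
rewrite kraw_rev /kraw mulr_sumr; apply: eq_bigr => -[j /= lt_jm] _.
have le_jm : (j <= m)%N by rewrite -ltnS.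
have sign : (-1) ^+ (m - j) = (-1) ^+ m * ((-1) ^+ j : R).
  by rewrite -[in RHS](subnK le_jm) exprD -mulrA -exprD addnn -mul2n exprM sqrrN !expr1n mulr1.
by rewrite sign opprB addrC subrK; ring.
Qed.

Lemma cay_kraw m x y : cay m x y = m`!%:R * kraw m ((y - x) / 2) y.
Proof.
have halves : y - (y - x) / 2 = (x + y) / 2 by field.
rewrite kraw_rev halves /cay mulr_sumr; apply: eq_bigr => -[j /= lt_jm] _.
have le_jm : (j <= m)%N by rewrite -ltnS.
have -> : (x - y) / 2 = - ((y - x) / 2) by field.
rewrite rising_opp !falling_gbinom -(bin_fact le_jm) !natrM; ring.
Qed.

Lemma pc_kraw s k :
  pc s k = \poly_(m < k.+1) ((2 ^+ m)^-1 * falling (k%:R : R) m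
                               * kraw m ((k%:R - s) / 2) k%:R).
Proof.
apply: eq_poly => m _.
by rewrite cay_kraw -natr_bin_fact !mulrA.
Qed.

End FactorialsKrawtchouk.

Theorem corollary7p3 (R : numFieldType) (k l : nat) :
  pc (k%:R - 2 * l%:R : R) k =
    \poly_(m < k.+1) ((2 ^+ m)^-1 * falling (k%:R : R) m * kraw m (l%:R : R) k%:R)
  /\
  pc (2 * k%:R - l%:R : R) l =
    \poly_(m < l.+1) ((-1) ^+ m * (2 ^+ m)^-1 * falling (l%:R : R) m
                        * kraw m (k%:R : R) l%:R).
Proof.
rewrite !pc_kraw; split; apply: eq_poly => m _.
- by have -> : (k%:R - (k%:R - 2 * l%:R)) / 2 = l%:R :> R by field.
- have -> : (l%:R - (2 * k%:R - l%:R)) / 2 = l%:R - k%:R :> R by field.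
  by rewrite kraw_reflect; ring.
Qed.
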